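(* Let $G$ be a group and $\mathcal{R}$ a $G$-graded algebra (or ring). Then $\mathcal{R}$ is graded primitive with minimal graded left ideals if and only if there exist a $G$-graded division algebra (or ring) $\mathcal{D}$, a graded right vector space $V$ over $\mathcal{D}$ and a total graded subspace $W\subset V^{\mathrm{gr}*}$ such that $\mathcal{R}$ is isomorphic to a graded subalgebra (subring) of $\mathfrak{L}_W^{\mathrm{gr}}(V)$ containing $\mathfrak{F}_W^{\mathrm{gr}}(V)$. Moreover, $\mathfrak{F}_W^{\mathrm{gr}}(V)$ is the only such subalgebra (subring) that is graded simple.
   Context: A $G$-graded algebra $\mathcal{R}=\bigoplus_g\mathcal{R}_g$ satisfies $\mathcal{R}_g\mathcal{R}_h\subset\mathcal{R}_{gh}$; a graded left module $M$ satisfies $\mathcal{R}_gM_h\subset M_{gh}$. $M$ is graded simple if $\mathcal{R}M\ne0$ and $M$ has no nonzero proper graded submodules. $\mathcal{R}$ is graded primitive if it has a faithful graded simple graded left module; ''with minimal graded left ideals'' means $\mathcal{R}$ has a nonzero graded left ideal minimal among graded left ideals. $\mathcal{R}$ is graded simple if $\mathcal{R}^2\ne0$ and it has no nonzero proper graded ideals. A graded division algebra is a $G$-graded unital associative algebra whose nonzero homogeneous elements are invertible; a graded right vector space over it is a graded right module. A map $f$ between graded spaces is homogeneous of degree $h$ if $f(M_g)\subset N_{hg}$. $V^{\mathrm{gr}*}$ is the span of homogeneous $\mathcal{D}$-linear maps $V\to\mathcal{D}$, a graded left $\mathcal{D}$-space; a graded subspace $W\subset V^{\mathrm{gr}*}$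 is total if for every $0\ne v\in V$ some $w\in W$ has $w(v)\ne0$. $\operatorname{End}^{\mathrm{gr}}_{\mathcal{D}}(V)$ is the span of homogeneous $\mathcal{D}$-linear operators; $\mathfrak{L}_W^{\mathrm{gr}}(V)$ consists of those $A\in\operatorname{End}^{\mathrm{gr}}_{\mathcal{D}}(V)$ whose adjoint $f\mapsto f\circ A$ maps $W$ into $W$; $\mathfrak{F}_W^{\mathrm{gr}}(V)$ is the span of operators $v\otimes w:u\mapsto v\,w(u)$ with $v\in V$, $w\in W$ homogeneous. *)

From HB Require Import structures.
From mathcomp Require Import all_boot all_order all_algebra.
Set Implicit Arguments. Unset Strict Implicit. Unset Printing Implicit Defensive.
Import GRing.Theory.
Local Open Scope ring_scope.

Record group := Group {
  gcar :> Type;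
  gmul : gcar -> gcar -> gcar;
  gone : gcar;
  ginv : gcar -> gcar;
  gmulA : forall x y z, gmul x (gmul y z) = gmul (gmul x y) z;
  gmul1 : forall x, gmul gone x = x;
  gmulr1 : forall x, gmul x gone = x;
  gmulV : forall x, gmul (ginv x) x = gone;
  gmulrV : forall x, gmul x (ginv x) = gone }.

(* hom g is the homogeneous component of degree g, and M = (+)_g M_g
   (direct sum: every element is a finite sum of homogeneous elements,
   and homogeneous elements of pairwise distinct degrees are independent). *)
Definition is_grading (G : group) (M : zmodType) (hom : G -> M -> Prop) : Prop :=
  [/\ (forall g, hom g 0),
      (forall g x y, hom g x -> hom g y -> hom g (x - y)),
      (forall x : M, exists n (gs : 'I_n -> G) (xs : 'I_n -> M),
          (forall i, hom (gs i) (xs i)) /\ x = \sum_(i < n) xs i) &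
      (forall n (gs : 'I_n -> G) (xs : 'I_n -> M), injective gs ->
          (forall i, hom (gs i) (xs i)) -> \sum_(i < n) xs i = 0 ->
          forall i, xs i = 0)].

Definition graded_subset (G : group) (M : zmodType) (hom : G -> M -> Prop)
  (N : M -> Prop) : Prop :=
  forall x, N x -> exists n (gs : 'I_n -> G) (xs : 'I_n -> M),
    (forall i, hom (gs i) (xs i) /\ N (xs i)) /\ x = \sum_(i < n) xs i.

Record gring (G : group) := GRingRec {
  rcar :> zmodType;
  rmul : rcar -> rcar -> rcar;
  rmulA : forall x y z, rmul x (rmul y z) = rmul (rmul x y) z;
  rmulDl : forall x y z, rmul (x + y) z = rmul x z + rmul y z;
  rmulDr : forall x y z, rmul x (y + z) = rmul x y + rmul x z;
  rhom : G -> rcar -> Prop;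
  rhom_grading : is_grading rhom;
  rhom_mul : forall g h x y, rhom g x -> rhom h y -> rhom (gmul g h) (rmul x y) }.

Record gmodule (G : group) (R : gring G) := GModule {
  mcar :> zmodType;
  act : R -> mcar -> mcar;
  actDl : forall (r s : R) m, act (r + s) m = act r m + act s m;
  actDr : forall r m n, act r (m + n) = act r m + act r n;
  actA : forall r s m, act (rmul r s) m = act r (act s m);
  mhom : G -> mcar -> Prop;
  mhom_grading : is_grading mhom;
  mhom_act : forall g h r m, rhom g r -> mhom h m -> mhom (gmul g h) (act r m) }.

Section RingNotions.
Variables (G : group) (R : gring G).

Definition graded_submodule (M : gmodule R) (N : M -> Prop) : Prop :=
  [/\ N 0, (forall x y, N x -> N y -> N (x - y)),
      (forall r x, N x -> N (act r x)) & graded_subset (@mhom G R M) N].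

Definition graded_simple_module (M : gmodule R) : Prop :=
  (exists (r : R) (m : M), act r m <> 0) /\
  forall N : M -> Prop, graded_submodule N -> (forall x, N x -> x = 0) \/ (forall x, N x).

Definition faithful_module (M : gmodule R) : Prop :=
  forall r : R, (forall m : M, act r m = 0) -> r = 0.

Definition graded_primitive : Prop :=
  exists M : gmodule R, faithful_module M /\ graded_simple_module M.

Definition graded_left_ideal (I : R -> Prop) : Prop :=
  [/\ I 0, (forall x y, I x -> I y -> I (x - y)),
      (forall r x, I x -> I (rmul r x)) & graded_subset (@rhom G R) I].

Definition has_minimal_graded_left_ideal : Prop :=
  exists I, [/\ graded_left_ideal I, (exists x, I x /\ x <> 0) &
    forall J, graded_left_ideal J -> (exists x, J x /\ x <> 0) ->
      (forall x, J x -> I x) -> forall x, I x -> J x].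

End RingNotions.

Record gdivring (G : group) := GDivRing {
  dcar :> pzRingType;
  dhom : G -> dcar -> Prop;
  dhom_grading : is_grading dhom;
  dhom_mul : forall g h x y, dhom g x -> dhom h y -> dhom (gmul g h) (x * y);
  dhom_inv : forall g x, dhom g x -> x <> 0 -> exists y, x * y = 1 /\ y * x = 1 }.

Record gvspace (G : group) (D : gdivring G) := GVSpace {
  vcar :> zmodType;
  vscale : vcar -> D -> vcar;
  vscaleDl : forall v w a, vscale (v + w) a = vscale v a + vscale w a;
  vscaleDr : forall v (a b : D), vscale v (a + b) = vscale v a + vscale v b;
  vscaleA : forall v (a b : D), vscale v (a * b) = vscale (vscale v a) b;
  vscale1 : forall v, vscale v 1 = v;
  vhom : G -> vcar -> Prop;
  vhom_grading : is_grading vhom;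
  vhom_scale : forall g h v a, vhom g v -> dhom h a -> vhom (gmul g h) (vscale v a) }.

Section VectorNotions.
Variables (G : group) (D : gdivring G) (V : gvspace D).

Definition hom_functional (f : V -> D) (h : G) : Prop :=
  [/\ (forall v w, f (v + w) = f v + f w),
      (forall v a, f (vscale v a) = f v * a) &
      (forall g v, vhom g v -> dhom (gmul h g) (f v))].

Definition gr_dual (f : V -> D) : Prop :=
  exists n (a : 'I_n -> D) (hs : 'I_n -> G) (fs : 'I_n -> V -> D),
    (forall i, hom_functional (fs i) (hs i)) /\
    forall v, f v = \sum_(i < n) a i * fs i v.

Definition graded_dual_subspace (W : (V -> D) -> Prop) : Prop :=
  [/\ (forall f, W f -> gr_dual f),
      W (fun _ => 0),
      (forall f g, W f -> W g -> W (fun v => f v - g v)),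
      (forall a f, W f -> W (fun v => a * f v)) &
      (forall f, W f -> exists n (hs : 'I_n -> G) (fs : 'I_n -> V -> D),
         (forall i, hom_functional (fs i) (hs i) /\ W (fs i)) /\
         forall v, f v = \sum_(i < n) fs i v)].

Definition total_dual (W : (V -> D) -> Prop) : Prop :=
  forall v : V, v <> 0 -> exists w, W w /\ w v <> 0.

Definition hom_operator (T : V -> V) (h : G) : Prop :=
  [/\ (forall v w, T (v + w) = T v + T w),
      (forall v a, T (vscale v a) = vscale (T v) a) &
      (forall g v, vhom g v -> vhom (gmul h g) (T v))].

Definition gr_end (T : V -> V) : Prop :=
  exists n (hs : 'I_n -> G) (Ts : 'I_n -> V -> V),
    (forall i, hom_operator (Ts i) (hs i)) /\ forall v, T v = \sum_(i < n) Ts i v.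

Definition LW (W : (V -> D) -> Prop) (T : V -> V) : Prop :=
  gr_end T /\ forall f, W f -> W (fun v => f (T v)).

Definition FW (W : (V -> D) -> Prop) (T : V -> V) : Prop :=
  exists n (gs hs : 'I_n -> G) (vs : 'I_n -> V) (ws : 'I_n -> V -> D),
    (forall i, [/\ vhom (gs i) (vs i), W (ws i) & hom_functional (ws i) (hs i)]) /\
    forall u, T u = \sum_(i < n) vscale (vs i) (ws i u).

Definition graded_opset (S : (V -> V) -> Prop) : Prop :=
  forall T, S T -> exists n (hs : 'I_n -> G) (Ts : 'I_n -> V -> V),
    (forall i, hom_operator (Ts i) (hs i) /\ S (Ts i)) /\
    forall v, T v = \sum_(i < n) Ts i v.

Definition graded_subring_LW (W : (V -> D) -> Prop) (S : (V -> V) -> Prop) : Prop :=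
  [/\ (forall T, S T -> LW W T),
      S (fun _ => 0),
      (forall A B, S A -> S B -> S (fun v => A v - B v)),
      (forall A B, S A -> S B -> S (fun v => A (B v))) &
      graded_opset S].

Definition graded_ideal_of (S I : (V -> V) -> Prop) : Prop :=
  [/\ (forall A, I A -> S A),
      I (fun _ => 0),
      (forall A B, I A -> I B -> I (fun v => A v - B v)),
      (forall A B, S A -> I B -> I (fun v => A (B v)) /\ I (fun v => B (A v))) &
      graded_opset I].

Definition graded_simple_opring (S : (V -> V) -> Prop) : Prop :=
  (exists A B, [/\ S A, S B & exists v, A (B v) <> 0]) /\
  forall I, graded_ideal_of S I ->
    (forall A, I A -> forall v, A v = 0) \/ (forall A, S A -> I A).

(* phi : R -> S is an isomorphism of graded rings onto S
   (S graded by S_g = S /\ homogeneous operators of degree g) *)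
Definition graded_iso_onto (R : gring G) (S : (V -> V) -> Prop) (phi : R -> V -> V) : Prop :=
  [/\ (forall x y v, phi (x + y) v = phi x v + phi y v),
      (forall x y v, phi (rmul x y) v = phi x (phi y v)),
      (forall x y, (forall v, phi x v = phi y v) -> x = y) &
      ((forall x, S (phi x)) /\
       (forall T, S T -> exists x, forall v, phi x v = T v))] /\
  ((forall g x, rhom g x -> hom_operator (phi x) g) /\
   (forall g T, S T -> hom_operator T g ->
      exists x, rhom g x /\ forall v, phi x v = T v)).

End VectorNotions.

(* Jacobson's structure theory of primitive rings with minimal one-sided
   ideals, carried out degreewise.  Given a faithful graded simple module M and
   a minimal graded left ideal I, pick a homogeneous m with I m = M; by
   minimality the annihilator of m in I vanishes, which yields an idempotent e
   of degree 1 with I = R e.  Then D = eRe is a graded division ring (Schur),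
   V = Re is a graded right D-space, the functionals v |-> e a v (a in eR) form a
   total subspace W of V^gr*, and left multiplication embeds R into L_W(V),
   containing F_W(V) since v (x) (v |-> e a v) is left multiplication by v a.
   Conversely V is a faithful graded simple module over any R between F_W(V)
   and L_W(V), and the preimage of V (x) w0, where w0 v0 = 1, is a minimal
   graded left ideal.  Finally F_W(V) is a graded ideal of every such R and
   every nonzero graded ideal contains each v (x) w, since
   v (x) w = (v (x) w') T (u (x) w) whenever w' (T u) = 1; so F_W(V) is the only
   graded simple one. *)

From HB Require Import structures.
From mathcomp Require Import all_boot all_order all_algebra.
From Stdlib Require Import Classical FunctionalExtensionality ClassicalEpsilon.
Set Implicit Arguments. Unset Strict Implicit. Unset Printing Implicit Defensive.
Import GRing.Theory.
Local Open Scope ring_scope.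

Definition fam_rcons (A : Type) n (f : 'I_n -> A) (a : A) : 'I_n.+1 -> A :=
  fun k => if unlift ord_max k is Some k' then f k' else a.

Lemma fam_rcons_widen A n (f : 'I_n -> A) a k :
  fam_rcons f a (widen_ord (leqnSn n) k) = f k.
Proof.
have -> : widen_ord (leqnSn n) k = lift ord_max k.
  by apply/val_inj; rewrite /= /bump leqNgt ltn_ord.
by rewrite /fam_rcons liftK.
Qed.

Lemma fam_rcons_max A n (f : 'I_n -> A) a : fam_rcons f a ord_max = a.
Proof. by rewrite /fam_rcons unlift_none. Qed.

Lemma fam_rcons_inj A n (f : 'I_n -> A) a :
  injective f -> (forall k, f k <> a) -> injective (fam_rcons f a).
Proof.
move=> f_inj fa i j; rewrite /fam_rcons.
case: unliftP => [i' ->|->]; case: unliftP => [j' ->|->] //.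
- by move/f_inj->.
- by move/fa.
- by move/esym/fa.
Qed.

Lemma sumr_fam_rcons (M : zmodType) n (f : 'I_n -> M) a :
  \sum_(k < n.+1) fam_rcons f a k = \sum_(k < n) f k + a.
Proof.
rewrite big_ord_recr /= fam_rcons_max; congr (_ + _).
by apply: eq_bigr => k _; exact: fam_rcons_widen.
Qed.

Definition fam_cat (A : Type) n m (f : 'I_n -> A) (g : 'I_m -> A) : 'I_(n + m) -> A :=
  fun k => match split k with inl i => f i | inr j => g j end.

Lemma sumr_fam_cat (M : zmodType) n m (f : 'I_n -> M) (g : 'I_m -> M) :
  \sum_(k < n + m) fam_cat f g k = \sum_(k < n) f k + \sum_(k < m) g k.
Proof.
rewrite big_split_ord /=; congr (_ + _); apply: eq_bigr => k _; rewrite /fam_cat.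
- by rewrite (unsplitK (inl _ k)).
- by rewrite (unsplitK (inr _ k)).
Qed.

Lemma sumr_neq0_term (M : zmodType) n (xs : 'I_n -> M) :
  \sum_(i < n) xs i <> 0 -> exists i, xs i <> 0.
Proof.
move=> sum_neq0; apply: NNPP => all0; apply: sum_neq0; apply: big1 => i _.
by apply: NNPP => xi_neq0; apply: all0; exists i.
Qed.

Section Additive.
Variables (M N : zmodType) (f : M -> N).
Hypothesis fD : {morph f : x y / x + y}.

Lemma additive0 : f 0 = 0.
Proof. by apply: (addrI (f 0)); rewrite -fD !addr0. Qed.

Lemma additiveN x : f (- x) = - f x.
Proof. by apply: (addrI (f x)); rewrite -fD !subrr additive0. Qed.

Lemma additiveB x y : f (x - y) = f x - f y.
Proof. by rewrite fD additiveN. Qed.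

Lemma additive_sum n (xs : 'I_n -> M) : f (\sum_(i < n) xs i) = \sum_(i < n) f (xs i).
Proof. exact: (big_morph f fD additive0). Qed.

End Additive.

Section GroupCancel.
Variable G : group.

Lemma gmulI (c : G) : injective (gmul c).
Proof.
move=> a b /(congr1 (gmul (ginv c))).
by rewrite !gmulA gmulV !gmul1.
Qed.

Lemma gmulIr (c : G) : injective (fun a => gmul a c).
Proof.
move=> a b /(congr1 (fun a => gmul a (ginv c))) /=.
by rewrite -!gmulA gmulrV !gmulr1.
Qed.

End GroupCancel.

Section RingArithmetic.
Variables (G : group) (R : gring G).

Lemma rmul0r (x : R) : rmul 0 x = 0.
Proof. exact: (additive0 (f := fun a => rmul a x) (fun a b => rmulDl a b x)). Qed.

Lemma rmulr0 (x : R) : rmul x 0 = 0.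
Proof. exact: (additive0 (rmulDr x)). Qed.

Lemma rmulNl (x y : R) : rmul (- x) y = - rmul x y.
Proof. exact: (additiveN (f := fun a => rmul a y) (fun a b => rmulDl a b y)). Qed.

Lemma rmulBl (x y z : R) : rmul (x - y) z = rmul x z - rmul y z.
Proof. exact: (additiveB (f := fun a => rmul a z) (fun a b => rmulDl a b z)). Qed.

Lemma rmulBr (x y z : R) : rmul x (y - z) = rmul x y - rmul x z.
Proof. exact: (additiveB (rmulDr x)). Qed.

Lemma rmul_suml n (xs : 'I_n -> R) y : rmul (\sum_(i < n) xs i) y = \sum_(i < n) rmul (xs i) y.
Proof. exact: (additive_sum (f := fun a => rmul a y) (fun a b => rmulDl a b y)). Qed.

Lemma rmul_sumr n (xs : 'I_n -> R) y : rmul y (\sum_(i < n) xs i) = \sum_(i < n) rmul y (xs i).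
Proof. exact: (additive_sum (rmulDr y)). Qed.

End RingArithmetic.

Section Grading.
Variables (G : group) (M : zmodType) (hom : G -> M -> Prop).
Hypothesis hom_gr : is_grading hom.

Lemma hom0 g : hom g 0.
Proof. by case: hom_gr. Qed.

Lemma homB g x y : hom g x -> hom g y -> hom g (x - y).
Proof. by case: hom_gr => _ hB _ _; apply: hB. Qed.

Lemma homN g x : hom g x -> hom g (- x).
Proof. by move=> hx; rewrite -sub0r; apply: homB => //; apply: hom0. Qed.

Lemma homD g x y : hom g x -> hom g y -> hom g (x + y).
Proof. by move=> hx hy; rewrite -[y]opprK; apply: homB => //; apply: homN. Qed.

Lemma hom_sum_or0 g n (xs : 'I_n -> M) :
  (forall i, xs i = 0 \/ hom g (xs i)) -> hom g (\sum_(i < n) xs i).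
Proof.
move=> hxs; apply: big_ind => [|x y|i _]; [exact: hom0|exact: homD|].
by case: (hxs i) => // ->; apply: hom0.
Qed.

Lemma hom_decomp (x : M) : exists n (gs : 'I_n -> G) (xs : 'I_n -> M),
  (forall i, hom (gs i) (xs i)) /\ x = \sum_(i < n) xs i.
Proof. by case: hom_gr. Qed.

Lemma hom_indep n (gs : 'I_n -> G) (xs : 'I_n -> M) : injective gs ->
  (forall i, hom (gs i) (xs i)) -> \sum_(i < n) xs i = 0 -> forall i, xs i = 0.
Proof. by case: hom_gr => _ _ _; apply. Qed.

Lemma hom_decomp_neq0 (x : M) : x <> 0 -> exists g y, hom g y /\ y <> 0.
Proof.
move=> x_neq0; have [n [gs [xs [hxs x_sum]]]] := hom_decomp x.
rewrite x_sum in x_neq0.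
by have [i xi_neq0] := sumr_neq0_term x_neq0; exists (gs i), (xs i).
Qed.

Lemma graded_subset_neq0 (N : M -> Prop) (x : M) :
  graded_subset hom N -> N x -> x <> 0 -> exists g y, [/\ hom g y, N y & y <> 0].
Proof.
move=> grN Nx x_neq0; have [n [gs [xs [hxs x_sum]]]] := grN x Nx.
rewrite x_sum in x_neq0; have [i xi_neq0] := sumr_neq0_term x_neq0.
by have [hi Ni] := hxs i; exists (gs i), (xs i).
Qed.

(* Gathering the terms of equal degree, each decomposition becomes one with
   pairwise distinct degrees. *)
Lemma decomp_distinct_in (P : M -> Prop) : P 0 -> (forall x y, P x -> P y -> P (x - y)) ->
  forall n (gs : 'I_n -> G) (xs : 'I_n -> M), (forall i, hom (gs i) (xs i) /\ P (xs i)) ->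
  exists m (gs' : 'I_m -> G) (xs' : 'I_m -> M), [/\ injective gs',
    (forall i, hom (gs' i) (xs' i) /\ P (xs' i)) & \sum_(i < n) xs i = \sum_(i < m) xs' i].
Proof.
move=> P0 PB.
have PD x y : P x -> P y -> P (x + y).
  move=> Px Py; have -> : x + y = x - (0 - y) by rewrite sub0r opprK.
  by apply: (PB) => //; apply: (PB).
elim=> [|n IH] gs xs hxs; first by exists 0%N, gs, xs; split => // -[].
rewrite big_ord_recr /=.
have [m [gs' [xs' [gs'_inj hxs' ->]]]] :=
  IH (fun k => gs (widen_ord (leqnSn n) k)) (fun k => xs (widen_ord (leqnSn n) k)) (fun k => hxs _).
case: (classic (exists j, gs' j = gs ord_max)) => [[j gs'j]|new_degree].
  exists m, gs', (fun k => if k == j then xs' k + xs ord_max else xs' k); split => //.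
    move=> k; case: eqP => [->|_] //; have [hj Pj] := hxs' j; have [hmax Pmax] := hxs ord_max.
    by split; [apply: homD; rewrite // gs'j|apply: PD].
  rewrite [RHS](bigD1 j) //= eqxx [in RHS](eq_bigr (fun k => xs' k)) => [|k /negbTE -> //].
  by rewrite [in LHS](bigD1 j) //= addrAC.
exists m.+1, (fam_rcons gs' (gs ord_max)), (fam_rcons xs' (xs ord_max)); split.
- by apply: fam_rcons_inj => // k gs'k; apply: new_degree; exists k.
- by move=> k; rewrite /fam_rcons; case: unliftP => [k' _|_]; [exact: hxs'|exact: hxs].
- by rewrite sumr_fam_rcons.
Qed.

Lemma graded_subset_distinct (P : M -> Prop) (x : M) :
  P 0 -> (forall x y, P x -> P y -> P (x - y)) -> graded_subset hom P -> P x ->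
  exists m (gs : 'I_m -> G) (xs : 'I_m -> M),
    [/\ injective gs, (forall i, hom (gs i) (xs i) /\ P (xs i)) & x = \sum_(i < m) xs i].
Proof.
move=> P0 PB grP Px; have [n [gs [xs [hxs ->]]]] := grP x Px.
have [m [gs' [xs' [gs'_inj hxs' ->]]]] := decomp_distinct_in P0 PB hxs.
by exists m, gs', xs'.
Qed.

Lemma hom_decomp_distinct (x : M) : exists n (gs : 'I_n -> G) (xs : 'I_n -> M),
  [/\ injective gs, (forall i, hom (gs i) (xs i)) & x = \sum_(i < n) xs i].
Proof.
have [n [gs [xs [hxs ->]]]] := hom_decomp x.
have [m [gs' [xs' [gs'_inj hxs' ->]]]] :=
  @decomp_distinct_in (fun _ => True) I (fun _ _ _ _ => I) n gs xs (fun i => conj (hxs i) I).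
by exists m, gs', xs'; split=> // i; case: (hxs' i).
Qed.

Lemma hom_sum_components n (gs : 'I_n -> G) (xs : 'I_n -> M) g y : injective gs ->
  (forall i, hom (gs i) (xs i)) -> hom g y -> \sum_(i < n) xs i = y ->
  (forall i, gs i <> g -> xs i = 0) /\ (forall i, gs i = g -> xs i = y).
Proof.
move=> gs_inj hxs hy sum_y.
case: (classic (exists j, gs j = g)) => [[j gsj]|no_g].
  pose xs' k := if k == j then xs k - y else xs k.
  have xs'0 : forall k, xs' k = 0.
    apply: (hom_indep gs_inj) => [k|].
      by rewrite /xs'; case: eqP => [->|] //; apply: homB; rewrite // gsj.
    rewrite (bigD1 j) //= /xs' eqxx (eq_bigr (fun k => xs k)) => [|k /negbTE -> //].
    by rewrite -sum_y (bigD1 j) //= opprD addrA subrr add0r addNr.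
  split=> i gsi.
    have /negbTE ij : i != j by apply/eqP => ij; apply: gsi; rewrite ij.
    by have := xs'0 i; rewrite /xs' ij.
  have ij : i = j by apply: gs_inj; rewrite gsi.
  by have /eqP := xs'0 i; rewrite /xs' ij eqxx subr_eq0 => /eqP.
have hext : forall k, hom (fam_rcons gs g k) (fam_rcons xs (- y) k).
  by move=> k; rewrite /fam_rcons; case: unliftP => [k' _|_] //; apply: homN.
have gs_ext_inj := fam_rcons_inj gs_inj (fun k gsk => no_g (ex_intro _ k gsk)).
have := hom_indep gs_ext_inj hext; rewrite sumr_fam_rcons sum_y subrr => /(_ erefl) ext0.
split => i gsi; last by case: no_g; exists i.
by have := ext0 (widen_ord (leqnSn n) i); rewrite fam_rcons_widen.
Qed.

Lemma graded_map_components (N : zmodType) (homN : G -> N -> Prop) (f : M -> N) (sigma : G -> G) :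
  is_grading homN -> injective sigma -> {morph f : x y / x + y} ->
  (forall g x, hom g x -> homN (sigma g) (f x)) ->
  forall n (gs : 'I_n -> G) (xs : 'I_n -> M), injective gs -> (forall i, hom (gs i) (xs i)) ->
  f (\sum_(i < n) xs i) = 0 -> forall i, f (xs i) = 0.
Proof.
move=> homN_gr sigma_inj fD f_hom n gs xs gs_inj hxs.
rewrite (additive_sum fD); case: homN_gr => _ _ _ indepN.
by apply: (indepN _ (fun i => sigma (gs i))) => [i j /sigma_inj /gs_inj|i]; last exact: f_hom.
Qed.

Lemma graded_subset_kernel (N : zmodType) (homN : G -> N -> Prop) (f : M -> N) (sigma : G -> G)
    (P : M -> Prop) :
  is_grading homN -> injective sigma -> {morph f : x y / x + y} ->
  (forall g x, hom g x -> homN (sigma g) (f x)) ->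
  P 0 -> (forall x y, P x -> P y -> P (x - y)) -> graded_subset hom P ->
  graded_subset hom (fun x => P x /\ f x = 0).
Proof.
move=> homN_gr sigma_inj fD f_hom P0 PB grP x [Px fx0].
have [m [gs [xs [gs_inj hxs x_sum]]]] := graded_subset_distinct P0 PB grP Px.
exists m, gs, xs; split => // i; have [hi Pi] := hxs i; do 2!split => //.
apply: (graded_map_components homN_gr sigma_inj fD f_hom gs_inj) => [j|].
  by case: (hxs j).
by rewrite -x_sum.
Qed.

End Grading.

Section GradedDivisionRing.
Variables (G : group) (D : gdivring G).
Let dhom_gr := dhom_grading D.

Lemma dhom1 : dhom (gone G) (1 : D).
Proof.
have [n [gs [xs [gs_inj hxs one_sum]]]] := hom_decomp_distinct dhom_gr 1.
have xs_annihilates i : gs i <> gone G -> forall h x, dhom h x -> xs i * x = 0.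
  move=> gsi h x hx.
  have [vanish _] := hom_sum_components dhom_gr (gs := fun k => gmul (gs k) h)
    (xs := fun k => xs k * x) (g := h) (fun a b ab => gs_inj _ _ (gmulIr ab))
    (fun k => dhom_mul (hxs k) hx) hx ltac:(by rewrite -mulr_suml -one_sum mul1r).
  by apply: vanish; rewrite -{2}(gmul1 h) => /gmulIr.
rewrite one_sum; apply: hom_sum_or0 => // i.
case: (classic (gs i = gone G)) => [<-|gsi]; [by right|left].
rewrite -[xs i]mulr1 [X in _ * X]one_sum mulr_sumr; apply: big1 => k _.
exact: xs_annihilates gsi _ _ (hxs k).
Qed.

Lemma dhom_inv_hom g (x : D) : dhom g x -> x <> 0 ->
  exists y, [/\ dhom (ginv g) y, x * y = 1 & y * x = 1].
Proof.
move=> hx x_neq0; have [y [xy1 yx1]] := dhom_inv hx x_neq0.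
exists y; split => //.
have [n [gs [ys [gs_inj hys y_sum]]]] := hom_decomp_distinct dhom_gr y.
have [vanish _] := hom_sum_components dhom_gr (gs := fun k => gmul g (gs k))
  (xs := fun k => x * ys k) (g := gone G) (y := 1) (fun a b ab => gs_inj _ _ (gmulI ab))
  (fun k => dhom_mul hx (hys k)) dhom1 ltac:(by rewrite -mulr_sumr -y_sum).
rewrite y_sum; apply: hom_sum_or0 => // i.
case: (classic (gs i = ginv g)) => [<-|gsi]; [by right|left].
have xysi0 : x * ys i = 0 by apply: vanish; rewrite -(gmulrV g) => /gmulI.
by rewrite -[ys i]mul1r -yx1 -mulrA xysi0 mulr0.
Qed.

End GradedDivisionRing.

Section GradedVectorSpace.
Variables (G : group) (D : gdivring G) (V : gvspace D).

Lemma vscale0l (a : D) : vscale (0 : V) a = 0.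
Proof. exact: (additive0 (fun v w => vscaleDl v w a)). Qed.

Lemma vscaleBl (v w : V) a : vscale (v - w) a = vscale v a - vscale w a.
Proof. exact: (additiveB (fun v w => vscaleDl v w a)). Qed.

Lemma vscaleNl (v : V) a : vscale (- v) a = - vscale v a.
Proof. exact: (additiveN (fun v w => vscaleDl v w a)). Qed.

Lemma vscale_suml n (vs : 'I_n -> V) a :
  vscale (\sum_(i < n) vs i) a = \sum_(i < n) vscale (vs i) a.
Proof. exact: (additive_sum (fun v w => vscaleDl v w a)). Qed.

Lemma vscale_sumr (v : V) n (as_ : 'I_n -> D) :
  vscale v (\sum_(i < n) as_ i) = \sum_(i < n) vscale v (as_ i).
Proof. exact: (additive_sum (vscaleDr v)). Qed.

Lemma gr_endD (T : V -> V) : gr_end T -> {morph T : x y / x + y}.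
Proof.
move=> [n [hs [Ts [hTs T_sum]]]] x y; rewrite !T_sum -big_split /=.
by apply: eq_bigr => i _; case: (hTs i) => -> _ _.
Qed.

Lemma gr_end_scale (T : V -> V) : gr_end T -> forall v a, T (vscale v a) = vscale (T v) a.
Proof.
move=> [n [hs [Ts [hTs T_sum]]]] v a; rewrite !T_sum vscale_suml.
by apply: eq_bigr => i _; case: (hTs i) => _ -> _.
Qed.

Definition rank_one (v : V) (w : V -> D) : V -> V := fun u => vscale v (w u).

Lemma rank_one_hom g h (v : V) w :
  vhom g v -> hom_functional w h -> hom_operator (rank_one v w) (gmul g h).
Proof.
move=> hv [wD wZ hw]; split => [u u'|u a|k u hu]; rewrite /rank_one.
- by rewrite wD vscaleDr.
- by rewrite wZ vscaleA.
- by rewrite -gmulA; apply: vhom_scale => //; apply: hw.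
Qed.

Lemma rank_one_id (v u : V) w : w u = 1 -> rank_one v w u = v.
Proof. by move=> wu1; rewrite /rank_one wu1 vscale1. Qed.

Lemma hom_functional_comp (w : V -> D) h (T : V -> V) g :
  hom_functional w h -> hom_operator T g -> hom_functional (fun v => w (T v)) (gmul h g).
Proof.
move=> [wD wZ hw] [TD TZ hT]; split => [v v'|v a|k v hv].
- by rewrite TD wD.
- by rewrite TZ wZ.
- by rewrite -gmulA; apply: hw; apply: hT.
Qed.

Lemma hom_operator_ext (T T' : V -> V) g : T =1 T' -> hom_operator T g -> hom_operator T' g.
Proof.
move=> TT' [TD TZ hT]; split => [v w|v a|k v hv]; rewrite -!TT'; [exact: TD|exact: TZ|exact: hT].
Qed.

Variable W : (V -> D) -> Prop.

Lemma FW_ext (T T' : V -> V) : T =1 T' -> FW W T -> FW W T'.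
Proof.
move=> TT' [n [gs [hs [vs [ws [hvw T_sum]]]]]]; exists n, gs, hs, vs, ws.
by split => // u; rewrite -TT'.
Qed.

Lemma FW0 : FW W (fun _ => 0).
Proof.
exists 0%N, (fun _ => gone G), (fun _ => gone G), (fun _ => 0), (fun _ _ => 0).
by split => [[]//|u]; rewrite big_ord0.
Qed.

Lemma FWN T : FW W T -> FW W (fun u => - T u).
Proof.
move=> [n [gs [hs [vs [ws [hvw T_sum]]]]]].
exists n, gs, hs, (fun i => - vs i), ws; split => [i|u].
  by case: (hvw i) => hv Ww hw; split => //; apply: homN (vhom_grading V) _ _ hv.
by rewrite T_sum -sumrN; apply: eq_bigr => i _; rewrite vscaleNl.
Qed.

Lemma FWD T T' : FW W T -> FW W T' -> FW W (fun u => T u + T' u).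
Proof.
move=> [n [gs [hs [vs [ws [hvw T_sum]]]]]] [m [gs' [hs' [vs' [ws' [hvw' T'_sum]]]]]].
exists (n + m)%N, (fam_cat gs gs'), (fam_cat hs hs'), (fam_cat vs vs'), (fam_cat ws ws').
split => [k|u]; first by rewrite /fam_cat; case: split => i; [exact: hvw|exact: hvw'].
rewrite T_sum T'_sum.
rewrite -(sumr_fam_cat (fun i => vscale (vs i) (ws i u)) (fun i => vscale (vs' i) (ws' i u))).
by apply: eq_bigr => k _; rewrite /fam_cat; case: split.
Qed.

Lemma FWB T T' : FW W T -> FW W T' -> FW W (fun u => T u - T' u).
Proof. by move=> FT FT'; apply: FWD => //; apply: FWN. Qed.

Lemma FW_sum n (Ts : 'I_n -> V -> V) : (forall i, FW W (Ts i)) ->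
  FW W (fun u => \sum_(i < n) Ts i u).
Proof.
elim: n Ts => [|n IH] Ts FTs; first by apply: (FW_ext _ FW0) => u; rewrite big_ord0.
apply: (FW_ext (T := fun u => \sum_(i < n) Ts (widen_ord (leqnSn n) i) u + Ts ord_max u)).
  by move=> u; rewrite big_ord_recr.
by apply: FWD => //; apply: IH.
Qed.

Lemma FW_rank_one (v : V) w h : W w -> hom_functional w h -> FW W (rank_one v w).
Proof.
move=> Ww hw; have [n [gs [vs [hvs v_sum]]]] := hom_decomp (vhom_grading V) v.
exists n, gs, (fun _ => h), vs, (fun _ => w); split => // u.
by rewrite /rank_one v_sum vscale_suml.
Qed.

Hypothesis W_dual : graded_dual_subspace W.
Hypothesis W_total : total_dual W.

Lemma W_hom_nonvanishing (u : V) : u <> 0 ->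
  exists h w, [/\ W w, hom_functional w h & w u <> 0].
Proof.
move=> u_neq0; have [w [Ww wu]] := W_total u_neq0.
case: W_dual => _ _ _ _ grW; have [n [hs [ws [hws w_sum]]]] := grW w Ww.
rewrite w_sum in wu; have [i wiu] := sumr_neq0_term wu.
by exists (hs i), (ws i); case: (hws i).
Qed.

(* Rescale a homogeneous functional not vanishing at [u] by the inverse of the
   homogeneous scalar [w u]. *)
Lemma W_hom_normalized k (u : V) : vhom k u -> u <> 0 ->
  exists h w, [/\ W w, hom_functional w h & w u = 1].
Proof.
move=> hu u_neq0; have [h [w [Ww [wD wZ hw] wu]]] := W_hom_nonvanishing u_neq0.
have [c [hc _ cwu]] := dhom_inv_hom (hw _ _ hu) wu.
exists (gmul (ginv (gmul h k)) h), (fun v => c * w v); split => //.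
- by case: W_dual => _ _ _ Wscale _; apply: Wscale.
- split => [v v'|v a|g v hv]; first by rewrite wD mulrDr.
  + by rewrite wZ mulrA.
  + by rewrite -gmulA; apply: dhom_mul => //; apply: hw.
Qed.

Lemma hom_normalized_pair : (exists v : V, v <> 0) ->
  exists k (v : V) h w, [/\ vhom k v, v <> 0, W w, hom_functional w h & w v = 1].
Proof.
case=> v /(hom_decomp_neq0 (vhom_grading V)) [k [u [hu u_neq0]]].
have [h [w [Ww hw wu]]] := W_hom_normalized hu u_neq0.
by exists k, u, h, w.
Qed.

End GradedVectorSpace.

Section GradedSimpleSubring.
Variables (G : group) (D : gdivring G) (V : gvspace D) (W : (V -> D) -> Prop).

Lemma graded_ideal_sum (S I : (V -> V) -> Prop) : graded_ideal_of S I ->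
  forall n (Ts : 'I_n -> V -> V), (forall i, I (Ts i)) -> I (fun u => \sum_(i < n) Ts i u).
Proof.
move=> [_ I0 IB _ _]; elim=> [|n IH] Ts ITs.
  rewrite (_ : (fun u => _) = fun _ => 0) //.
  by apply: functional_extensionality => u; rewrite big_ord0.
rewrite (_ : (fun u => _) =
  fun u => \sum_(i < n) Ts (widen_ord (leqnSn n) i) u - (0 - Ts ord_max u)).
  by apply: (IB); [apply: IH|apply: (IB)].
by apply: functional_extensionality => u; rewrite big_ord_recr sub0r opprK.
Qed.

Lemma FW_graded_opset : graded_opset (FW W).
Proof.
move=> T [n [gs [hs [vs [ws [hvw T_sum]]]]]].
exists n, (fun i => gmul (gs i) (hs i)), (fun i => rank_one (vs i) (ws i)); split => // i.
have [hv Wi hi] := hvw i; split; first exact: rank_one_hom.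
exact: FW_rank_one Wi hi.
Qed.

Variable S : (V -> V) -> Prop.
Hypothesis S_sub : graded_subring_LW W S.
Hypothesis FW_S : forall T, FW W T -> S T.

Lemma FW_mull A T : S A -> FW W T -> FW W (fun u => A (T u)).
Proof.
move=> SA [n [gs [hs [vs [ws [hvw T_sum]]]]]].
have [A_end _] : LW W A by case: S_sub => S_LW _ _ _ _; apply: S_LW.
apply: (FW_ext (T := fun u => \sum_(i < n) rank_one (A (vs i)) (ws i) u)).
  move=> u; rewrite T_sum (additive_sum (gr_endD A_end)); apply: eq_bigr => i _.
  by rewrite gr_end_scale.
by apply: FW_sum => i; have [_ Wi hi] := hvw i; apply: FW_rank_one Wi hi.
Qed.

Lemma FW_mulr A T : S A -> FW W T -> FW W (fun u => T (A u)).
Proof.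
move=> SA [n [gs [hs [vs [ws [hvw T_sum]]]]]].
case: S_sub => S_LW _ _ _ grS; have [m [hsA [As [hAs A_sum]]]] := grS A SA.
apply: (FW_ext
  (T := fun u => \sum_(i < n) \sum_(j < m) rank_one (vs i) (fun v => ws i (As j v)) u)).
  move=> u; rewrite T_sum; apply: eq_bigr => i _; have [_ _ [wD _ _]] := hvw i.
  by rewrite A_sum (additive_sum wD) vscale_sumr.
apply: FW_sum => i; apply: FW_sum => j; have [_ Wi hi] := hvw i; have [hAj SAj] := hAs j.
apply: (@FW_rank_one _ _ _ _ _ _ (gmul (hs i) (hsA j))); last exact: hom_functional_comp.
by have [_ W_stable] := S_LW _ SAj; apply: W_stable.
Qed.

Lemma FW_graded_ideal : graded_ideal_of S (FW W).
Proof.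
split => //; [exact: FW0|exact: FWB| |exact: FW_graded_opset].
by move=> A T SA FT; split; [apply: FW_mull|apply: FW_mulr].
Qed.

Hypothesis V_neq0 : exists v : V, v <> 0.
Hypothesis W_dual : graded_dual_subspace W.
Hypothesis W_total : total_dual W.

(* [v (x) w = (v (x) w') o T o (u (x) w)] for homogeneous [T] in [I] and [u]
   with [w' (T u) = 1]. *)
Lemma graded_ideal_rank_one (I : (V -> V) -> Prop) : graded_ideal_of S I ->
  (exists A v, I A /\ A v <> 0) ->
  forall v w h, W w -> hom_functional w h -> I (rank_one v w).
Proof.
move=> [_ _ _ I_ideal grI] [A [v [IA Av]]] v' w h Ww hw.
have [m [hs [Ts [hTs A_sum]]]] := grI A IA.
rewrite A_sum in Av; have [j Tjv] := sumr_neq0_term Av.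
have [[TD TZ hT] ITj] := hTs j.
have [n [gs [vs [hvs v_sum]]]] := hom_decomp (vhom_grading V) v.
rewrite v_sum (additive_sum TD) in Tjv; have [i Tvi] := sumr_neq0_term Tjv.
have [h' [w' [Ww' hw' w'Tvi]]] := W_hom_normalized W_dual W_total (hT _ _ (hvs i)) Tvi.
have S_right : S (rank_one (vs i) w) by apply: FW_S; apply: FW_rank_one Ww hw.
have S_left : S (rank_one v' w') by apply: FW_S; apply: FW_rank_one Ww' hw'.
have -> : rank_one v' w = fun t => rank_one v' w' (Ts j (rank_one (vs i) w t)).
  apply: functional_extensionality => t; rewrite /rank_one TZ.
  by case: hw' => _ -> _; rewrite w'Tvi mul1r.
exact: (I_ideal _ _ S_left (I_ideal _ _ S_right ITj).2).1.
Qed.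

Lemma graded_simple_opring_iff_FW : graded_simple_opring S <-> forall T, S T <-> FW W T.
Proof.
have [k [u [h [w [hu u_neq0 Ww hw wu]]]]] := hom_normalized_pair W_dual W_total V_neq0.
have FWu : FW W (rank_one u w) by apply: FW_rank_one Ww hw.
split=> [[_ simple] T|S_FW].
  split; last exact: FW_S.
  case: (simple _ FW_graded_ideal) => [FW_zero|S_FW]; last exact: S_FW.
  by case: u_neq0; rewrite -(rank_one_id u wu); apply: FW_zero.
split.
  exists (rank_one u w), (rank_one u w); split; [exact: FW_S|exact: FW_S|].
  by exists u; rewrite !rank_one_id.
move=> I HI; case: (classic (exists A v, I A /\ A v <> 0)) => [I_neq0|I_zero]; [right|left].
  move=> T /S_FW [n [gs [hs [vs [ws [hvw T_sum]]]]]].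
  rewrite (functional_extensionality _ _ T_sum).
  apply: (graded_ideal_sum HI) => i; have [_ Wi hi] := hvw i.
  exact (graded_ideal_rank_one HI I_neq0 (vs i) Wi hi).
by move=> A IA v; apply: NNPP => Av; apply: I_zero; exists A, v.
Qed.

End GradedSimpleSubring.

Section FromOperatorRing.
Variables (G : group) (R : gring G) (D : gdivring G) (V : gvspace D) (W : (V -> D) -> Prop).
Hypothesis V_neq0 : exists v : V, v <> 0.
Hypothesis W_dual : graded_dual_subspace W.
Hypothesis W_total : total_dual W.
Variables (S : (V -> V) -> Prop) (phi : R -> V -> V).
Hypothesis S_sub : graded_subring_LW W S.
Hypothesis FW_S : forall T, FW W T -> S T.
Hypothesis phi_iso : graded_iso_onto S phi.

Let phiD x y v : phi (x + y) v = phi x v + phi y v. Proof. by case: phi_iso => -[]. Qed.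
Let phiM x y v : phi (rmul x y) v = phi x (phi y v). Proof. by case: phi_iso => -[]. Qed.
Let phi_inj x y : phi x =1 phi y -> x = y.
Proof. by case: phi_iso => -[] _ _ phi_inj _ _; apply: phi_inj. Qed.
Let phi_onto T : S T -> exists x, phi x =1 T.
Proof. by case: phi_iso => -[] _ _ _ [_ phi_onto] _; apply: phi_onto. Qed.
Let phi_hom g x : rhom g x -> hom_operator (phi x) g.
Proof. by case: phi_iso => _ [phi_hom _]; apply: phi_hom. Qed.
Let phi_onto_hom g T : S T -> hom_operator T g -> exists x, rhom g x /\ phi x =1 T.
Proof. by case: phi_iso => _ [_ phi_onto_hom]; apply: phi_onto_hom. Qed.

Let phi_gr_end x : gr_end (phi x).
Proof.
case: phi_iso => -[] _ _ _ [phiS _] _; case: S_sub => S_LW _ _ _ _.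
by case: (S_LW _ (phiS x)).
Qed.

Let phi0 v : phi 0 v = 0.
Proof. exact: (additive0 (f := fun x => phi x v) (fun x y => phiD x y v)). Qed.

Let phiB x y v : phi (x - y) v = phi x v - phi y v.
Proof. exact: (additiveB (f := fun x => phi x v) (fun x y => phiD x y v)). Qed.

Let rank_one_preimage (v : V) w h : W w -> hom_functional w h -> exists r, phi r =1 rank_one v w.
Proof. by move=> Ww hw; apply: phi_onto; apply: FW_S; apply: FW_rank_one Ww hw. Qed.

Definition operator_module : gmodule R :=
  @GModule G R V phi phiD (fun r => gr_endD (phi_gr_end r)) phiM _ (vhom_grading V)
    (fun g h r v hr hv => match phi_hom hr with And3 _ _ phi_r_hom => phi_r_hom _ _ hv end).

Lemma operator_module_graded_simple : graded_simple_module operator_module.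
Proof.
split.
  have [k [u [h [w [hu u_neq0 Ww hw wu]]]]] := hom_normalized_pair W_dual W_total V_neq0.
  have [r phi_r] := rank_one_preimage u Ww hw.
  by exists r, u; rewrite /= phi_r rank_one_id.
move=> N [N0 NB Nact grN]; case: (classic (exists x, N x /\ x <> 0)) => [[x [Nx x_neq0]]|N_zero].
  right; have [k [y [hy Ny y_neq0]]] := graded_subset_neq0 grN Nx x_neq0.
  have [h [w [Ww hw wy]]] := W_hom_normalized W_dual W_total hy y_neq0.
  move=> t; have [r phi_r] := rank_one_preimage t Ww hw.
  by have := Nact r y Ny; rewrite /= phi_r rank_one_id.
by left=> x Nx; apply: NNPP => x_neq0; apply: N_zero; exists x.
Qed.

Lemma iso_graded_primitive : graded_primitive R.
Proof.
exists operator_module; split; last exact: operator_module_graded_simple.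
by move=> r r_zero; apply: phi_inj => v; rewrite phi0; apply: r_zero.
Qed.

Definition rank_one_ideal (w0 : V -> D) (x : R) : Prop :=
  exists u : V, phi x =1 rank_one u w0.

Lemma rank_one_ideal_graded w0 h0 : W w0 -> hom_functional w0 h0 ->
  graded_left_ideal (rank_one_ideal w0).
Proof.
move=> Ww0 hw0; split.
- by exists 0 => t; rewrite phi0 /rank_one vscale0l.
- move=> x y [u1 phi_x] [u2 phi_y]; exists (u1 - u2) => t.
  by rewrite phiB phi_x phi_y /rank_one vscaleBl.
- move=> r x [u phi_x]; exists (phi r u) => t.
  by rewrite phiM phi_x /rank_one (gr_end_scale (phi_gr_end r)).
move=> x [u phi_x]; have [n [gs [us [hus u_sum]]]] := hom_decomp (vhom_grading V) u.
have [f hf] := choice (fun j (r : R) => rhom (gmul (gs j) h0) r /\ phi r =1 rank_one (us j) w0)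
  (fun j => phi_onto_hom (FW_S (FW_rank_one (us j) Ww0 hw0)) (rank_one_hom (hus j) hw0)).
exists n, (fun j => gmul (gs j) h0), f; split => [j|].
  by have [hfj phi_fj] := hf j; split => //; exists (us j).
apply: phi_inj => t; rewrite (additive_sum (f := fun x => phi x t) (fun x y => phiD x y t)).
by rewrite phi_x /rank_one u_sum vscale_suml; apply: eq_bigr => j _; have [_ ->] := hf j.
Qed.

Lemma rank_one_ideal_minimal w0 k0 v0 J : vhom k0 v0 -> w0 v0 = 1 ->
  graded_left_ideal J -> (exists x, J x /\ x <> 0) ->
  (forall x, J x -> rank_one_ideal w0 x) -> forall x, rank_one_ideal w0 x -> J x.
Proof.
move=> hv0 w0v0 [J0 JB Jmul grJ] [y [Jy y_neq0]] J_sub x [q phi_x].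
have [g [z [hz Jz z_neq0]]] := graded_subset_neq0 grJ Jy y_neq0.
have [u phi_z] := J_sub _ Jz.
have hu : vhom (gmul g k0) u.
  by have [_ _ phi_z_hom] := phi_hom hz; rewrite -(rank_one_id u w0v0) -phi_z; apply: phi_z_hom.
have u_neq0 : u <> 0.
  by move=> u0; apply: z_neq0; apply: phi_inj => t; rewrite phi_z u0 phi0 /rank_one vscale0l.
have [h [w [Ww hw wu]]] := W_hom_normalized W_dual W_total hu u_neq0.
have [r phi_r] := rank_one_preimage q Ww hw.
have -> : x = rmul r z.
  apply: phi_inj => t; rewrite phiM phi_z phi_x /rank_one (gr_end_scale (phi_gr_end r)).
  by rewrite phi_r /rank_one wu vscale1.
exact: Jmul.
Qed.

Lemma iso_has_minimal_graded_left_ideal : has_minimal_graded_left_ideal R.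
Proof.
have [k0 [v0 [h0 [w0 [hv0 v0_neq0 Ww0 hw0 w0v0]]]]] := hom_normalized_pair W_dual W_total V_neq0.
exists (rank_one_ideal w0); split; [exact: rank_one_ideal_graded Ww0 hw0| |].
  have [x phi_x] := rank_one_preimage v0 Ww0 hw0.
  exists x; split; first by exists v0.
  by move=> x0; apply: v0_neq0; rewrite -(rank_one_id v0 w0v0) -phi_x x0 phi0.
by move=> J; apply: rank_one_ideal_minimal hv0 w0v0.
Qed.

End FromOperatorRing.

Record idempotent (G : group) (R : gring G) := Idempotent {
  idem : R;
  idemK : rmul idem idem = idem }.

Section Corner.
Variables (G : group) (R : gring G) (ie : idempotent R).
Local Notation e := (idem ie).

(* [corner] is the ring eRe, with unit e; [rcorner] is Re, a right eRe-module. *)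
Definition corner := {x : R | (rmul e x == x) && (rmul x e == x)}.
Definition rcorner := {x : R | rmul x e == x}.

Lemma corner_mem (x : R) : rmul e x = x -> rmul x e = x -> (rmul e x == x) && (rmul x e == x).
Proof. by move=> -> ->; rewrite !eqxx. Qed.

Lemma rcorner_mem (x : R) : rmul x e = x -> rmul x e == x.
Proof. by move/eqP. Qed.

Lemma cornerl (x : corner) : rmul e (val x) = val x.
Proof. by case: x => x /= /andP [/eqP]. Qed.

Lemma cornerr (x : corner) : rmul (val x) e = val x.
Proof. by case: x => x /= /andP [_ /eqP]. Qed.

Lemma rcornerr (x : rcorner) : rmul (val x) e = val x.
Proof. by case: x => x /= /eqP. Qed.

Definition corner0 : corner := exist _ 0 (corner_mem (rmulr0 _) (rmul0r _)).
Definition corner_add (x y : corner) : corner := exist _ (val x + val y)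
  (@corner_mem (val x + val y) ltac:(by rewrite rmulDr !cornerl) ltac:(by rewrite rmulDl !cornerr)).
Definition corner_opp (x : corner) : corner := exist _ (- val x)
  (@corner_mem (- val x)
     ltac:(by rewrite (additiveN (rmulDr _)) cornerl) ltac:(by rewrite rmulNl cornerr)).
Definition corner1 : corner := exist _ e (corner_mem (idemK ie) (idemK ie)).
Definition corner_mul (x y : corner) : corner := exist _ (rmul (val x) (val y))
  (@corner_mem (rmul (val x) (val y))
     ltac:(by rewrite rmulA cornerl) ltac:(by rewrite -rmulA cornerr)).

Definition rcorner0 : rcorner := exist _ 0 (rcorner_mem (rmul0r _)).
Definition rcorner_add (x y : rcorner) : rcorner :=
  exist _ (val x + val y) (@rcorner_mem (val x + val y) ltac:(by rewrite rmulDl !rcornerr)).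
Definition rcorner_opp (x : rcorner) : rcorner :=
  exist _ (- val x) (@rcorner_mem (- val x) ltac:(by rewrite rmulNl rcornerr)).

End Corner.

HB.instance Definition _ (G : group) (R : gring G) (e : idempotent R) := Choice.on (corner e).
HB.instance Definition _ (G : group) (R : gring G) (e : idempotent R) := SubType.on (corner e).
HB.instance Definition _ (G : group) (R : gring G) (e : idempotent R) := Choice.on (rcorner e).
HB.instance Definition _ (G : group) (R : gring G) (e : idempotent R) := SubType.on (rcorner e).

Section CornerLaws.
Variables (G : group) (R : gring G) (e : idempotent R).

Lemma corner_addA : associative (@corner_add G R e).
Proof. by move=> x y z; apply: val_inj; rewrite /= addrA. Qed.
Lemma corner_addC : commutative (@corner_add G R e).
Proof. by move=> x y; apply: val_inj; rewrite /= addrC. Qed.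
Lemma corner_add0 : left_id (corner0 e) (@corner_add G R e).
Proof. by move=> x; apply: val_inj; rewrite /= add0r. Qed.
Lemma corner_addN : left_inverse (corner0 e) (@corner_opp G R e) (@corner_add G R e).
Proof. by move=> x; apply: val_inj; rewrite /= addNr. Qed.

Lemma rcorner_addA : associative (@rcorner_add G R e).
Proof. by move=> x y z; apply: val_inj; rewrite /= addrA. Qed.
Lemma rcorner_addC : commutative (@rcorner_add G R e).
Proof. by move=> x y; apply: val_inj; rewrite /= addrC. Qed.
Lemma rcorner_add0 : left_id (rcorner0 e) (@rcorner_add G R e).
Proof. by move=> x; apply: val_inj; rewrite /= add0r. Qed.
Lemma rcorner_addN : left_inverse (rcorner0 e) (@rcorner_opp G R e) (@rcorner_add G R e).
Proof. by move=> x; apply: val_inj; rewrite /= addNr. Qed.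

End CornerLaws.

HB.instance Definition _ (G : group) (R : gring G) (e : idempotent R) :=
  GRing.isZmodule.Build (corner e) (@corner_addA G R e) (@corner_addC G R e)
    (@corner_add0 G R e) (@corner_addN G R e).
HB.instance Definition _ (G : group) (R : gring G) (e : idempotent R) :=
  GRing.isZmodule.Build (rcorner e) (@rcorner_addA G R e) (@rcorner_addC G R e)
    (@rcorner_add0 G R e) (@rcorner_addN G R e).

Section CornerRingLaws.
Variables (G : group) (R : gring G) (e : idempotent R).

Lemma corner_mulA : associative (@corner_mul G R e).
Proof. by move=> x y z; apply: val_inj; rewrite /= rmulA. Qed.
Lemma corner_mul1 : left_id (corner1 e) (@corner_mul G R e).
Proof. by move=> x; apply: val_inj; rewrite /= cornerl. Qed.
Lemma corner_mulr1 : right_id (corner1 e) (@corner_mul G R e).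
Proof. by move=> x; apply: val_inj; rewrite /= cornerr. Qed.
Lemma corner_mulDl : left_distributive (@corner_mul G R e) +%R.
Proof. by move=> x y z; apply: val_inj; rewrite /= rmulDl. Qed.
Lemma corner_mulDr : right_distributive (@corner_mul G R e) +%R.
Proof. by move=> x y z; apply: val_inj; rewrite /= rmulDr. Qed.

End CornerRingLaws.

HB.instance Definition _ (G : group) (R : gring G) (e : idempotent R) :=
  GRing.Zmodule_isPzRing.Build (corner e) (@corner_mulA G R e) (@corner_mul1 G R e)
    (@corner_mulr1 G R e) (@corner_mulDl G R e) (@corner_mulDr G R e).

Section CornerMaps.
Variables (G : group) (R : gring G) (ie : idempotent R).
Local Notation e := (idem ie).

Definition cut (x : R) : corner ie := exist _ (rmul e (rmul x e))
  (@corner_mem _ _ ie (rmul e (rmul x e))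
     ltac:(by rewrite rmulA idemK) ltac:(by rewrite -!rmulA idemK)).

Definition rcut (x : R) : rcorner ie :=
  exist _ (rmul x e) (@rcorner_mem _ _ ie (rmul x e) ltac:(by rewrite -rmulA idemK)).

Definition rcorner_scale (v : rcorner ie) (d : corner ie) : rcorner ie :=
  exist _ (rmul (val v) (val d))
    (@rcorner_mem _ _ ie (rmul (val v) (val d)) ltac:(by rewrite -rmulA cornerr)).

Definition rcorner_act (x : R) (v : rcorner ie) : rcorner ie :=
  exist _ (rmul x (val v)) (@rcorner_mem _ _ ie (rmul x (val v)) ltac:(by rewrite -rmulA rcornerr)).

Lemma rcorner_scaleDl v w d : rcorner_scale (v + w) d = rcorner_scale v d + rcorner_scale w d.
Proof. by apply: val_inj; rewrite /= rmulDl. Qed.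

Lemma rcorner_scaleDr v (d d' : corner ie) :
  rcorner_scale v (d + d') = rcorner_scale v d + rcorner_scale v d'.
Proof. by apply: val_inj; rewrite /= rmulDr. Qed.

Lemma rcorner_scaleA v (d d' : corner ie) :
  rcorner_scale v (d * d') = rcorner_scale (rcorner_scale v d) d'.
Proof. by apply: val_inj; rewrite /= rmulA. Qed.

Lemma rcorner_scale1 v : rcorner_scale v 1 = v.
Proof. by apply: val_inj; rewrite /= rcornerr. Qed.

Lemma val_cornerD (x y : corner ie) : val (x + y) = val x + val y. Proof. by []. Qed.
Lemma val_cornerB (x y : corner ie) : val (x - y) = val x - val y. Proof. by []. Qed.
Lemma val_cornerM (x y : corner ie) : val (x * y) = rmul (val x) (val y). Proof. by []. Qed.
Lemma val_corner1 : val (1 : corner ie) = e. Proof. by []. Qed.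
Lemma val_rcornerD (v w : rcorner ie) : val (v + w) = val v + val w. Proof. by []. Qed.
Lemma val_rcornerB (v w : rcorner ie) : val (v - w) = val v - val w. Proof. by []. Qed.

Lemma val_corner_sum n (xs : 'I_n -> corner ie) : val (\sum_(i < n) xs i) = \sum_(i < n) val (xs i).
Proof. exact: (@additive_sum (corner ie) R val (fun x y => erefl)). Qed.

Lemma val_rcorner_sum n (xs : 'I_n -> rcorner ie) :
  val (\sum_(i < n) xs i) = \sum_(i < n) val (xs i).
Proof. exact: (@additive_sum (rcorner ie) R val (fun x y => erefl)). Qed.

End CornerMaps.

Section RegularModule.
Variables (G : group) (R : gring G).

Definition regular_module : gmodule R :=
  @GModule G R R (@rmul _ R) (@rmulDl _ R) (@rmulDr _ R) (fun r s m => esym (rmulA r s m))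
    _ (rhom_grading R) (@rhom_mul _ R).

Lemma graded_left_ideal_annihilator (M : gmodule R) (I : R -> Prop) k (m : M) :
  graded_left_ideal I -> mhom k m -> graded_left_ideal (fun i => I i /\ act i m = 0).
Proof.
move=> [I0 IB Imul grI] hm.
have actDm : {morph (fun r => act r m) : r s / r + s} by move=> r s; apply: actDl.
split.
- by split => //; apply: additive0 actDm.
- move=> i j [Ii im0] [Ij jm0]; split; first exact: IB.
  by rewrite (additiveB actDm) im0 jm0 subrr.
- by move=> r i [Ii im0]; split; [apply: Imul|rewrite actA im0 (additive0 (actDr r))].
have act_hom g x : rhom g x -> mhom (gmul g k) (act x m) by move=> hx; apply: mhom_act.
exact: (graded_subset_kernel (rhom_grading R) (mhom_grading M) (@gmulIr _ k) actDm act_hom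
  I0 IB grI).
Qed.

Lemma principal_graded_left_ideal g (a : R) : rhom g a ->
  graded_left_ideal (fun y => exists r, y = rmul r a).
Proof.
move=> ha; split.
- by exists 0; rewrite rmul0r.
- by move=> y1 y2 [r1 ->] [r2 ->]; exists (r1 - r2); rewrite rmulBl.
- by move=> s y [r ->]; exists (rmul s r); rewrite rmulA.
move=> y [r ->]; have [n [gs [rs [hrs r_sum]]]] := hom_decomp (rhom_grading R) r.
exists n, (fun j => gmul (gs j) g), (fun j => rmul (rs j) a).
split; last by rewrite r_sum rmul_suml.
by move=> j; split; [apply: rhom_mul|exists (rs j)].
Qed.

End RegularModule.

Section CornerConstruction.
Variables (G : group) (R : gring G) (I : R -> Prop) (ie : idempotent R).
Local Notation e := (idem ie).
Hypothesis I_ideal : graded_left_ideal I.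
Hypothesis I_minimal : forall J, graded_left_ideal J -> (exists x, J x /\ x <> 0) ->
  (forall x, J x -> I x) -> forall x, I x -> J x.
Hypothesis e_hom : rhom (gone G) e.
Hypothesis e_neq0 : e <> 0.
Hypothesis I_e : I e.
Hypothesis I_mule : forall x, I x -> rmul x e = x.
Hypothesis I_faithful : forall x, (forall i, I i -> rmul x i = 0) -> x = 0.

Let R_gr := rhom_grading R.
Let IB x y : I x -> I y -> I (x - y). Proof. by case: I_ideal => _ IB _ _; apply: IB. Qed.
Let Imul r x : I x -> I (rmul r x). Proof. by case: I_ideal => _ _ Imul _; apply: Imul. Qed.

Lemma graded_left_subideal_zero J : graded_left_ideal J -> (forall x, J x -> I x) -> ~ J e ->
  forall x, J x -> x = 0.
Proof.
move=> J_ideal JI Je_false x Jx; apply: NNPP => x_neq0; apply: Je_false.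
exact: (I_minimal J_ideal (ex_intro _ x (conj Jx x_neq0)) JI I_e).
Qed.

Let cut_hom g x : rhom g x -> rhom g (rmul e (rmul x e)).
Proof. by move=> hx; have := rhom_mul e_hom (rhom_mul hx e_hom); rewrite gmulr1 gmul1. Qed.

Let rcut_hom g x : rhom g x -> rhom g (rmul x e).
Proof. by move=> hx; have := rhom_mul hx e_hom; rewrite gmulr1. Qed.

Definition corner_hom g (d : corner ie) := rhom g (val d).

Lemma corner_grading : is_grading corner_hom.
Proof.
split.
- by move=> g; exact: (hom0 R_gr).
- by move=> g x y; apply: (homB R_gr).
- move=> d; have [n [gs [xs [hxs d_sum]]]] := hom_decomp R_gr (val d).
  exists n, gs, (fun i => cut ie (xs i)); split; first by move=> i; apply: cut_hom.
  by apply: val_inj; rewrite val_corner_sum /= -rmul_sumr -rmul_suml -d_sum cornerr cornerl.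
- move=> n gs xs gs_inj hxs sum0 i; apply: val_inj.
  by apply: (hom_indep R_gr gs_inj hxs); rewrite -val_corner_sum sum0.
Qed.

Lemma corner_hom_mul g h (x y : corner ie) :
  corner_hom g x -> corner_hom h y -> corner_hom (gmul g h) (x * y).
Proof. exact: rhom_mul. Qed.

(* e = r a by minimality of I, which gives the left inverse e r e of a; the
   annihilator of a in I misses e, so it vanishes and e r e is a right
   inverse too. *)
Lemma corner_inv g (x : corner ie) : corner_hom g x -> x <> 0 ->
  exists y, x * y = 1 /\ y * x = 1.
Proof.
move=> hx x_neq0; set a := val x.
have a_neq0 : a <> 0 by move=> a0; apply: x_neq0; apply: val_inj.
have ea : rmul e a = a := cornerl x.
have ae : rmul a e = a := cornerr x.
have ha : rhom g a := hx.
have [r e_ra] : exists r, e = rmul r a.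
  apply: (I_minimal (principal_graded_left_ideal ha)) => //.
    by exists a; split => //; exists e; rewrite ea.
  by move=> y [r ->]; rewrite -ae rmulA; apply: Imul.
have ann0 := graded_left_subideal_zero
  (graded_left_ideal_annihilator (M := regular_module R) I_ideal ha) (fun i => @proj1 _ _)
  (fun '(conj _ ea0) => a_neq0 (etrans (esym ea) ea0)).
exists (cut ie r); split; last by apply: val_inj; rewrite /= -!rmulA ea -e_ra idemK.
apply: val_inj; rewrite val_cornerM val_corner1 /=.
apply/eqP; rewrite -subr_eq0; apply/eqP; apply: ann0; split.
  by apply: IB => //; rewrite !rmulA; apply: Imul.
by rewrite /= rmulBl -!rmulA ea -e_ra idemK ae subrr.
Qed.

Definition corner_divring : gdivring G := GDivRing corner_grading corner_hom_mul corner_inv.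

Definition rcorner_hom g (v : rcorner ie) := rhom g (val v).

Lemma rcorner_grading : is_grading rcorner_hom.
Proof.
split.
- by move=> g; exact: (hom0 R_gr).
- by move=> g x y; apply: (homB R_gr).
- move=> v; have [n [gs [xs [hxs v_sum]]]] := hom_decomp R_gr (val v).
  exists n, gs, (fun i => rcut ie (xs i)); split; first by move=> i; apply: rcut_hom.
  by apply: val_inj; rewrite val_rcorner_sum /= -rmul_suml -v_sum rcornerr.
- move=> n gs xs gs_inj hxs sum0 i; apply: val_inj.
  by apply: (hom_indep R_gr gs_inj hxs); rewrite -val_rcorner_sum sum0.
Qed.

Lemma rcorner_hom_scale g h (v : rcorner ie) (d : corner_divring) :
  rcorner_hom g v -> dhom h d -> rcorner_hom (gmul g h) (rcorner_scale v d).
Proof. exact: rhom_mul. Qed.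

Definition rcorner_vspace : gvspace corner_divring :=
  @GVSpace G corner_divring (rcorner ie) (@rcorner_scale G R ie) (@rcorner_scaleDl G R ie)
    (@rcorner_scaleDr G R ie) (@rcorner_scaleA G R ie) (@rcorner_scale1 G R ie)
    rcorner_hom rcorner_grading rcorner_hom_scale.

Definition corner_functional (a : R) (v : rcorner_vspace) : corner_divring :=
  cut ie (rmul a (val v)).

Definition corner_dual (f : rcorner_vspace -> corner_divring) : Prop :=
  exists a, rmul e a = a /\ forall v, f v = corner_functional a v.

Lemma val_corner_functional a v : val (corner_functional a v) = rmul e (rmul (rmul a (val v)) e).
Proof. by []. Qed.

Lemma val_corner_functional_e a v : rmul e a = a -> val (corner_functional a v) = rmul a (val v).
Proof. by move=> ea; rewrite val_corner_functional -rmulA rcornerr rmulA ea. Qed.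

Lemma corner_functional_hom h b : rhom h b -> hom_functional (corner_functional b) h.
Proof.
move=> hb; split => [v w|v d|g v hv]; try apply: val_inj.
- by rewrite val_cornerD !val_corner_functional val_rcornerD rmulDr rmulDl rmulDr.
- by rewrite val_cornerM !val_corner_functional /= -!rmulA cornerr cornerl.
- by rewrite /dhom /= /corner_hom val_corner_functional; apply: cut_hom; apply: rhom_mul.
Qed.

Lemma corner_dual_graded : graded_dual_subspace corner_dual.
Proof.
split.
- move=> f [a [ea f_a]]; have [n [gs [xs [hxs a_sum]]]] := hom_decomp R_gr a.
  exists n, (fun _ => 1), gs, (fun j => corner_functional (xs j)); split.
    by move=> j; apply: corner_functional_hom.
  move=> v; apply: val_inj; rewrite f_a val_corner_sum val_corner_functional.
  rewrite (eq_bigr (fun j => rmul e (rmul (rmul (xs j) (val v)) e))) => [|j _]; last first.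
    by rewrite mul1r val_corner_functional.
  by rewrite -rmul_sumr -rmul_suml -rmul_suml -a_sum.
- exists 0; split; first by rewrite rmulr0.
  by move=> v; apply: val_inj; rewrite val_corner_functional !rmul0r rmulr0.
- move=> f f' [a [ea f_a]] [b [eb f'_b]]; exists (a - b); split; first by rewrite rmulBr ea eb.
  by move=> v; apply: val_inj; rewrite val_cornerB f_a f'_b !val_corner_functional !rmulBl rmulBr.
- move=> c f [a [ea f_a]]; have ec : rmul e (val c) = val c := cornerl c.
  exists (rmul (val c) a); split; first by rewrite rmulA ec.
  move=> v; apply: val_inj; rewrite val_cornerM f_a !val_corner_functional_e ?rmulA ?ec //.
- move=> f [a [ea f_a]]; have [n [gs [xs [hxs a_sum]]]] := hom_decomp R_gr a.
  exists n, gs, (fun j => corner_functional (rmul e (xs j))); split.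
    move=> j; split.
      by apply: corner_functional_hom; have := rhom_mul e_hom (hxs j); rewrite gmul1.
    by exists (rmul e (xs j)); split => //; rewrite rmulA idemK.
  move=> v; apply: val_inj; rewrite f_a val_corner_functional_e // val_corner_sum.
  rewrite (eq_bigr (fun j => rmul (rmul e (xs j)) (val v))) => [|j _]; last first.
    by rewrite val_corner_functional_e // rmulA idemK.
  by rewrite -rmul_suml -rmul_sumr -a_sum ea.
Qed.

Lemma corner_annihilator_graded :
  graded_left_ideal (fun y => I y /\ forall r, rmul e (rmul r y) = 0).
Proof.
have I0 : I 0 by case: I_ideal.
split.
- by split => // r; rewrite !rmulr0.
- move=> y z [Iy ann_y] [Iz ann_z]; split => [|r]; first exact: IB.
  by rewrite !rmulBr ann_y ann_z subrr.
- by move=> s y [Iy ann_y]; split => [|r]; [apply: Imul|rewrite [rmul r _]rmulA ann_y].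
move=> y [Iy ann_y]; case: I_ideal => _ _ _ grI.
have [m [gs [ys [gs_inj hys y_sum]]]] := graded_subset_distinct R_gr I0 IB grI Iy.
exists m, gs, ys; split => // j; have [hj Ij] := hys j; do 2!split => //.
move=> r; have [p [hs [rs [hrs r_sum]]]] := hom_decomp R_gr r.
rewrite r_sum rmul_suml rmul_sumr; apply: big1 => k _.
have ann_comp := @graded_map_components _ _ _ _ _ (fun y => rmul e (rmul (rs k) y))
  (fun g => gmul (gone G) (gmul (hs k) g)) R_gr (fun a b ab => gmulI (gmulI ab))
  (fun a b => etrans (congr1 _ (rmulDr _ a b)) (rmulDr _ _ _))
  (fun g x hx => rhom_mul e_hom (rhom_mul (hrs k) hx)) m gs ys gs_inj (fun i => (hys i).1).
by apply: ann_comp; rewrite -y_sum.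
Qed.

(* If e R x = 0, then x lies in the annihilator of e R in I, which misses e
   and hence vanishes. *)
Lemma corner_dual_total : total_dual corner_dual.
Proof.
move=> v v_neq0; pose x := val v.
have x_neq0 : x <> 0 by move=> x0; apply: v_neq0; apply: val_inj.
have Ix : I x by rewrite /x -rcornerr; apply: Imul.
have [r erx] : exists r, rmul e (rmul r x) <> 0.
  apply: NNPP => ann_x; apply: x_neq0.
  apply: (graded_left_subideal_zero corner_annihilator_graded (fun y => @proj1 _ _)) => [[_]|].
    by move/(_ e); rewrite !idemK.
  by split => // r; apply: NNPP => erx; apply: ann_x; exists r.
have eer : rmul e (rmul e r) = rmul e r by rewrite rmulA idemK.
exists (corner_functional (rmul e r)); split; first by exists (rmul e r).
by move/(congr1 val); rewrite val_corner_functional_e // -rmulA.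
Qed.

Definition corner_act (x : R) : rcorner_vspace -> rcorner_vspace := @rcorner_act _ _ ie x.

Lemma val_corner_act x v : val (corner_act x v) = rmul x (val v). Proof. by []. Qed.

Lemma val_vscale (v : rcorner_vspace) d : val (vscale v d) = rmul (val v) (val d).
Proof. by []. Qed.

Definition corner_act_image (T : rcorner_vspace -> rcorner_vspace) : Prop :=
  exists x, T =1 corner_act x.

Lemma corner_act_hom g x : rhom g x -> hom_operator (corner_act x) g.
Proof.
move=> hx; split => [v w|v a|k v hv]; try apply: val_inj.
- by rewrite /= rmulDr.
- by rewrite /= rmulA.
- by rewrite /vhom /= /rcorner_hom /=; apply: rhom_mul.
Qed.

Lemma corner_act_decomp x :
  exists n (hs : 'I_n -> G) (Ts : 'I_n -> rcorner_vspace -> rcorner_vspace),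
  (forall i, hom_operator (Ts i) (hs i) /\ corner_act_image (Ts i)) /\
  forall v, corner_act x v = \sum_(i < n) Ts i v.
Proof.
have [n [gs [xs [hxs x_sum]]]] := hom_decomp R_gr x.
exists n, gs, (fun j => corner_act (xs j)); split.
  by move=> j; split; [apply: corner_act_hom|exists (xs j)].
by move=> v; apply: val_inj; rewrite val_rcorner_sum /= x_sum rmul_suml.
Qed.

Lemma corner_act_image_graded_subring : graded_subring_LW corner_dual corner_act_image.
Proof.
split.
- move=> T [x T_x]; split.
    have [n [hs [Ts [hTs x_sum]]]] := corner_act_decomp x.
    by exists n, hs, Ts; split => [i|v]; [case: (hTs i)|rewrite T_x x_sum].
  move=> f [a [ea f_a]]; exists (rmul a x); split; first by rewrite rmulA ea.
  by move=> v; apply: val_inj; rewrite f_a T_x !val_corner_functional_e ?rmulA ?ea.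
- by exists 0 => v; apply: val_inj; rewrite /= rmul0r.
- move=> A B [x A_x] [y B_y]; exists (x - y) => v; apply: val_inj.
  by rewrite val_rcornerB A_x B_y /= rmulBl.
- by move=> A B [x A_x] [y B_y]; exists (rmul x y) => v; apply: val_inj; rewrite A_x B_y /= rmulA.
- move=> T [x T_x]; have [n [hs [Ts [hTs x_sum]]]] := corner_act_decomp x.
  by exists n, hs, Ts; split => // v; rewrite T_x x_sum.
Qed.

Lemma FW_corner_act_image T : FW corner_dual T -> corner_act_image T.
Proof.
move=> [n [gs [hs [vs [ws [hvw T_sum]]]]]].
have [a ha] := choice (fun i a => rmul e a = a /\ forall v, ws i v = corner_functional a v)
  (fun i => match hvw i with And3 _ Wi _ => Wi end).
exists (\sum_(i < n) rmul (val (vs i)) (a i)) => u; apply: val_inj.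
rewrite T_sum val_rcorner_sum val_corner_act rmul_suml; apply: eq_bigr => i _.
by have [ea ->] := ha i; rewrite val_vscale val_corner_functional_e // rmulA.
Qed.

Lemma corner_act_hom_component g x n (gs : 'I_n -> G) (xs : 'I_n -> R) :
  injective gs -> (forall i, rhom (gs i) (xs i)) -> x = \sum_(i < n) xs i ->
  hom_operator (corner_act x) g -> forall i, gs i <> g -> corner_act (xs i) =1 (fun _ => 0).
Proof.
move=> gs_inj hxs x_sum [_ _ x_hom] i gsi v.
have vanish k (u : rcorner_vspace) : vhom k u -> rmul (xs i) (val u) = 0.
  move=> hu; have [vanish _] := hom_sum_components R_gr (gs := fun l => gmul (gs l) k)
    (xs := fun l => rmul (xs l) (val u)) (g := gmul g k) (y := val (corner_act x u))
    (fun a b ab => gs_inj _ _ (gmulIr ab)) (fun l => rhom_mul (hxs l) hu) (x_hom _ _ hu)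
    ltac:(by rewrite -rmul_suml -x_sum).
  by apply: vanish => /gmulIr.
have [p [ks [vs [hvs v_sum]]]] := hom_decomp rcorner_grading v.
apply: val_inj; rewrite v_sum /= val_rcorner_sum rmul_sumr.
by apply: big1 => l _; apply: (vanish _ _ (hvs l)).
Qed.

Lemma corner_act_iso : graded_iso_onto corner_act_image corner_act.
Proof.
split; split.
- by move=> x y v; apply: val_inj; rewrite val_rcornerD /= rmulDl.
- by move=> x y v; apply: val_inj; rewrite /= rmulA.
- move=> x y xy; apply/eqP; rewrite -subr_eq0; apply/eqP; apply: I_faithful => i Ii.
  have := congr1 val (xy (rcut ie i)); rewrite /= I_mule // => xiyi.
  by rewrite rmulBl xiyi subrr.
- by split => [x|T [x T_x]]; [exists x|exists x => v; rewrite T_x].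
- exact: corner_act_hom.
move=> g T [y T_y] T_hom.
have [n [gs [ys [gs_inj hys y_sum]]]] := hom_decomp_distinct R_gr y.
have y_hom : hom_operator (corner_act y) g := hom_operator_ext T_y T_hom.
have vanish := corner_act_hom_component gs_inj hys y_sum y_hom.
case: (classic (exists j, gs j = g)) => [[j gsj]|no_g].
  exists (ys j); split; first by rewrite -gsj.
  move=> v; apply: val_inj; rewrite T_y /= y_sum rmul_suml (bigD1 j) //= big1 ?addr0 //.
  move=> k /eqP kj; have gsk : gs k <> g by rewrite -gsj => /gs_inj.
  by have := congr1 val (vanish k gsk v).
exists 0; split; first exact: (hom0 R_gr).
move=> v; apply: val_inj; rewrite T_y /= y_sum rmul_suml rmul0r big1 // => k _.
by have := congr1 val (vanish k (fun gsk => no_g (ex_intro _ k gsk)) v).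
Qed.

Lemma corner_realization : exists (D : gdivring G) (V : gvspace D) (W : (V -> D) -> Prop),
  [/\ (exists v : V, v <> 0), graded_dual_subspace W, total_dual W &
    exists (S : (V -> V) -> Prop) (phi : R -> V -> V),
      [/\ graded_subring_LW W S, (forall T, FW W T -> S T) & graded_iso_onto S phi]].
Proof.
exists corner_divring, rcorner_vspace, corner_dual; split.
- exists (rcut ie e) => /(congr1 val) /=; rewrite idemK; exact: e_neq0.
- exact: corner_dual_graded.
- exact: corner_dual_total.
- exists corner_act_image, corner_act; split.
  + exact: corner_act_image_graded_subring.
  + exact: FW_corner_act_image.
  + exact: corner_act_iso.
Qed.

End CornerConstruction.

Section FromPrimitive.
Variables (G : group) (R : gring G) (M : gmodule R) (I : R -> Prop).
Hypothesis I_ideal : graded_left_ideal I.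

Let actDm (m : M) : {morph (fun r => act r m) : r s / r + s}.
Proof. by move=> r s; apply: actDl. Qed.

Lemma ideal_orbit_submodule k (m : M) : mhom k m ->
  graded_submodule (fun n => exists i, I i /\ n = act i m).
Proof.
move=> hm; case: I_ideal => I0 IB Imul grI; split.
- by exists 0; rewrite (additive0 (actDm m)).
- move=> a b [i [Ii ->]] [j [Ij ->]]; exists (i - j).
  by rewrite (additiveB (actDm m)); split => //; apply: IB.
- by move=> r a [i [Ii ->]]; exists (rmul r i); rewrite actA; split => //; apply: Imul.
move=> a [i [Ii ->]]; have [n [gs [xs [hxs i_sum]]]] := grI _ Ii.
exists n, (fun j => gmul (gs j) k), (fun j => act (xs j) m).
split; last by rewrite i_sum (additive_sum (actDm m)).
by move=> j; have [hj Ij] := hxs j; split; [exact: mhom_act|exists (xs j)].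
Qed.

Hypothesis I_minimal : forall J, graded_left_ideal J -> (exists x, J x /\ x <> 0) ->
  (forall x, J x -> I x) -> forall x, I x -> J x.
Variables (k : G) (m : M).
Hypothesis hm : mhom k m.
Hypothesis m_neq0 : m <> 0.
Hypothesis orbit_full : forall n : M, exists i, I i /\ n = act i m.

Lemma ideal_act_inj i : I i -> act i m = 0 -> i = 0.
Proof.
move=> Ii im0; apply: NNPP => i_neq0; have [e [Ie em]] := orbit_full m.
have [_ em0] := I_minimal (graded_left_ideal_annihilator I_ideal hm)
  (ex_intro _ i (conj (conj Ii im0) i_neq0)) (fun j => @proj1 _ _) Ie.
by apply: m_neq0; rewrite em.
Qed.

(* The degree-one component of any e in I with e m = m still fixes m. *)
Lemma ideal_unit_of_orbit : exists e, [/\ I e, rhom (gone G) e & act e m = m].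
Proof.
have [e [Ie em]] := orbit_full m; case: I_ideal => I0 IB _ grI.
have [p [gs [es [gs_inj hes e_sum]]]] := graded_subset_distinct (rhom_grading R) I0 IB grI Ie.
have [vanish fixed] := hom_sum_components (mhom_grading M) (gs := fun j => gmul (gs j) k)
  (xs := fun j => act (es j) m) (g := k) (y := m) (fun a b ab => gs_inj _ _ (gmulIr ab))
  (fun j => mhom_act (hes j).1 hm) hm ltac:(by rewrite -(additive_sum (actDm m)) -e_sum -em).
case: (classic (exists j, gs j = gone G)) => [[j gsj]|no_unit].
  exists (es j); have [hj Ij] := hes j; split => //; first by rewrite -gsj.
  by apply: fixed; rewrite gsj gmul1.
case: m_neq0; rewrite em e_sum (additive_sum (actDm m)); apply: big1 => j _.
apply: vanish => gsjk; apply: no_unit; exists j; apply: (@gmulIr _ k).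
by rewrite /= gsjk gmul1.
Qed.

Hypothesis M_faithful : faithful_module M.

Lemma orbit_realization : exists (D : gdivring G) (V : gvspace D) (W : (V -> D) -> Prop),
  [/\ (exists v : V, v <> 0), graded_dual_subspace W, total_dual W &
    exists (S : (V -> V) -> Prop) (phi : R -> V -> V),
      [/\ graded_subring_LW W S, (forall T, FW W T -> S T) & graded_iso_onto S phi]].
Proof.
have [e [Ie he em]] := ideal_unit_of_orbit; case: I_ideal => _ IB Imul _.
have fixes_m x : I x -> act x m = m -> rmul x e = x.
  move=> Ix xm; apply/eqP; rewrite eq_sym -subr_eq0; apply/eqP.
  apply: ideal_act_inj; first by apply: IB => //; apply: Imul.
  by rewrite (additiveB (actDm m)) actA em xm subrr.
have ee : rmul e e = e by apply: fixes_m.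
have I_mule x : I x -> rmul x e = x.
  move=> Ix; apply/eqP; rewrite eq_sym -subr_eq0; apply/eqP.
  apply: ideal_act_inj; first by apply: IB => //; apply: Imul.
  by rewrite (additiveB (actDm m)) actA em subrr.
have e_neq0 : e <> 0 by move=> e0; apply: m_neq0; rewrite -em e0 (additive0 (actDm m)).
have I_faithful x : (forall i, I i -> rmul x i = 0) -> x = 0.
  move=> x_kills_I; apply: M_faithful => n; have [i [Ii ->]] := orbit_full n.
  by rewrite -actA x_kills_I // (additive0 (actDm m)).
exact: (@corner_realization G R I (Idempotent ee) I_ideal I_minimal he e_neq0 Ie I_mule I_faithful).
Qed.

End FromPrimitive.

Lemma primitive_minimal_realization (G : group) (R : gring G) :
  graded_primitive R -> has_minimal_graded_left_ideal R ->
  exists (D : gdivring G) (V : gvspace D) (W : (V -> D) -> Prop),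
    [/\ (exists v : V, v <> 0), graded_dual_subspace W, total_dual W &
      exists (S : (V -> V) -> Prop) (phi : R -> V -> V),
        [/\ graded_subring_LW W S, (forall T, FW W T -> S T) & graded_iso_onto S phi]].
Proof.
move=> [M [M_faithful [_ M_simple]]] [I [I_ideal [x [Ix x_neq0]] I_minimal]].
have [n xn] : exists n : M, act x n <> 0.
  apply: NNPP => x_kills; apply: x_neq0; apply: M_faithful => n.
  by apply: NNPP => xn; apply: x_kills; exists n.
have [k [m [hm xm]]] : exists k (m : M), mhom k m /\ act x m <> 0.
  have [p [gs [ms [hms n_sum]]]] := hom_decomp (mhom_grading M) n.
  rewrite n_sum (additive_sum (actDr x)) in xn; have [i xmi] := sumr_neq0_term xn.
  by exists (gs i), (ms i).
have m_neq0 : m <> 0 by move=> m0; apply: xm; rewrite m0 (additive0 (actDr x)).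
have orbit_full : forall n : M, exists i, I i /\ n = act i m.
  case: (M_simple _ (ideal_orbit_submodule I_ideal hm)) => [orbit0|//].
  by case: xm; apply: orbit0; exists x.
exact (orbit_realization I_ideal I_minimal hm m_neq0 orbit_full M_faithful).
Qed.

Theorem theorem3p3 (G : group) (R : gring G) :
  ((graded_primitive R /\ has_minimal_graded_left_ideal R) <->
   exists (D : gdivring G) (V : gvspace D) (W : (V -> D) -> Prop),
     [/\ (exists v : V, v <> 0), graded_dual_subspace W, total_dual W &
       exists (S : (V -> V) -> Prop) (phi : R -> V -> V),
         [/\ graded_subring_LW W S, (forall T, FW W T -> S T) &
             graded_iso_onto S phi]])
  /\
  (forall (D : gdivring G) (V : gvspace D) (W : (V -> D) -> Prop),
     (exists v : V, v <> 0) -> graded_dual_subspace W -> total_dual W ->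
     forall S : (V -> V) -> Prop,
       graded_subring_LW W S -> (forall T, FW W T -> S T) ->
       (graded_simple_opring S <-> forall T, S T <-> FW W T)).
Proof.
split; last by move=> D V W V_neq0 W_dual W_total S S_sub FW_S; apply: graded_simple_opring_iff_FW.
split=> [[prim minimal]|[D [V [W [V_neq0 W_dual W_total [S [phi [S_sub FW_S phi_iso]]]]]]]].
  exact: primitive_minimal_realization.
split; first exact (iso_graded_primitive V_neq0 W_dual W_total S_sub FW_S phi_iso).
exact (iso_has_minimal_graded_left_ideal V_neq0 W_dual W_total S_sub FW_S phi_iso).
Qed.
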